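(* Let $F=\{f_i\}_{i=1}^N$ be a tight frame for $\mathcal H$. Then the following are equivalent: (i) $(F,S_F^{-1}F)\in\mathcal F^{(1)}$; (ii) $(F,S_F^{-1}F)\in\mathcal R^{(1)}$; (iii) $(F,S_F^{-1}F)\in\mathcal N^{(1)}$.
   Context: $\mathcal H$ is a complex Hilbert space of finite dimension $n$, inner product linear in the first argument, $N\ge n$. A finite sequence $F=\{f_i\}_{i=1}^N$ is a frame if there are $0<A\le B$ with $A\|f\|^2\le\sum_i|\langle f,f_i\rangle|^2\le B\|f\|^2$ for all $f$; tight if one can take $A=B$. $S_Ff=\sum_i\langle f,f_i\rangle f_i$; $S_F^{-1}F=\{S_F^{-1}f_i\}$ is the canonical dual. $G=\{g_i\}_{i=1}^N$ is a dual of $F$ if $f=\sum_i\langle f,g_i\rangle f_i$ for all $f$; $(F,G)$ is then an $(N,n)$ dual pair. $E_{\Lambda,F,G}f=\sum_{i\in\Lambda}\langle f,f_i\rangle g_i$. For a measure $\mathcal M$ on operators, let $\mathcal M^{(1)}_{F,G}=\max_{1\le i\le N}\mathcal M(E_{\{i\},F,G})$ and call $(F,G)$ optimal for $\mathcal M$ if $\mathcal M^{(1)}_{F,G}$ equals the infimum of $\mathcal M^{(1)}_{F',G'}$ over all $(N,n)$ dual pairs $(F',G')$ for $\mathcal H$. $\mathcal F^{(1)}$, $\mathcal R^{(1)}$, $\mathcal N^{(1)}$ denote the sets of optimal pairs for, respectively, the Frobenius norm $\|T\|_{\mathcal F}=\sqrt{\operatorname{tr}(T^*T)}$, the spectral radius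 $\rho(T)$, and the numerical radius $\omega(T)=\sup\{|\langle Tf,f\rangle|:\|f\|=1\}$. *)

(* R : realType, complex scalars C := R[i] (mathcomp-real-closed),
   the n-dimensional Hilbert space H is modelled as column vectors 'cV[R[i]]_n
   with the standard inner product (linear in the first argument),
   operators on H as matrices 'M[R[i]]_n acting by  A *m x. *)
From HB Require Import structures.
From mathcomp Require Import all_boot all_order all_algebra.
From mathcomp Require Import all_classical all_reals.
From mathcomp Require Export complex.
Set Implicit Arguments. Unset Strict Implicit. Unset Printing Implicit Defensive.
Import Order.TTheory GRing.Theory Num.Theory.
Local Open Scope ring_scope.
Local Open Scope classical_set_scope.

Section FrameDefs.
Variable R : realType.
Local Notation C := R[i].

Definition cmod (z : C) : R := complex.Re `|z|.

Definition adj (m p : nat) (A : 'M[C]_(m, p)) : 'M[C]_(p, m) :=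
  map_mx (fun z => z^*) A^T.

Definition inner (n : nat) (x y : 'cV[C]_n) : C := \sum_(k < n) x k 0 * (y k 0)^*.

Definition hnorm (n : nat) (x : 'cV[C]_n) : R := Num.sqrt (complex.Re (inner x x)).

Definition is_frame (n N : nat) (F : 'I_N -> 'cV[C]_n) : Prop :=
  exists A B : R, [/\ 0 < A, A <= B &
    forall f : 'cV[C]_n,
      A * hnorm f ^+ 2 <= \sum_(i < N) cmod (inner f (F i)) ^+ 2 /\
      \sum_(i < N) cmod (inner f (F i)) ^+ 2 <= B * hnorm f ^+ 2].

Definition is_tight_frame (n N : nat) (F : 'I_N -> 'cV[C]_n) : Prop :=
  exists A : R, 0 < A /\
    forall f : 'cV[C]_n, \sum_(i < N) cmod (inner f (F i)) ^+ 2 = A * hnorm f ^+ 2.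

(* frame operator S_F f = \sum_i <f, f_i> f_i, as the matrix \sum_i f_i f_i^* *)
Definition frame_op (n N : nat) (F : 'I_N -> 'cV[C]_n) : 'M[C]_n :=
  \sum_(i < N) (F i *m adj (F i)).

Definition canon_dual (n N : nat) (F : 'I_N -> 'cV[C]_n) : 'I_N -> 'cV[C]_n :=
  fun i => invmx (frame_op F) *m F i.

Definition is_dual (n N : nat) (F G : 'I_N -> 'cV[C]_n) : Prop :=
  forall f : 'cV[C]_n, f = \sum_(i < N) inner f (G i) *: F i.

Definition dual_pair (n N : nat) (F G : 'I_N -> 'cV[C]_n) : Prop :=
  is_frame F /\ is_dual F G.

(* E_{{i},F,G} f = <f, f_i> g_i, as the matrix g_i f_i^* *)
Definition E1 (n N : nat) (F G : 'I_N -> 'cV[C]_n) (i : 'I_N) : 'M[C]_n :=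
  G i *m adj (F i).

Definition frob_norm (n : nat) (T : 'M[C]_n) : R := Num.sqrt (complex.Re (\tr (adj T *m T))).

Definition spec_radius (n : nat) (T : 'M[C]_n) : R :=
  sup [set cmod l | l in [set l : C | eigenvalue T l]].

Definition num_radius (n : nat) (T : 'M[C]_n) : R :=
  sup [set cmod (inner (T *m f) f) | f in [set f : 'cV[C]_n | hnorm f = 1]].

(* M^{(1)}_{F,G} = max_i M(E_{{i},F,G}) ; for N = 0 this is 0 *)
Definition M1 (n N : nat) (M : 'M[C]_n -> R) (F G : 'I_N -> 'cV[C]_n) : R :=
  \big[Num.max/0]_(i < N) M (E1 F G i).

Definition optimal (n N : nat) (M : 'M[C]_n -> R) (F G : 'I_N -> 'cV[C]_n) : Prop :=
  dual_pair F G /\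
  M1 M F G = inf [set r : R | exists F' G' : 'I_N -> 'cV[C]_n,
                                dual_pair F' G' /\ r = M1 M F' G'].

End FrameDefs.

From HB Require Import structures.
From mathcomp Require Import all_boot all_order all_algebra.
From mathcomp Require Import all_classical all_reals.
From mathcomp Require Import complex.
From mathcomp Require Import ring.
From mathcomp Require Import cyclic separable cyclotomic.
Import Order.TTheory GRing.Theory Num.Theory.
Local Open Scope ring_scope.
Set Implicit Arguments. Unset Strict Implicit. Unset Printing Implicit Defensive.

(* Each of the three measures, evaluated on a rank-one operator [g f^*], lies
   between [|<g, f>|] and [||g|| ||f||].  For any dual pair,
   [n = tr (\sum_i f_i g_i^* ) <= \sum_i |<f_i, g_i>| <= N M^(1)], so the optimal
   value is at least [n / N] for all three measures; the harmonic frame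
   [u_j = (w^(j k))_k], [w] a primitive [N]-th root of unity, is tight with
   [||u_j||^2 = n], and with its canonical dual it attains [n / N].  If [F] is
   tight, [S_F = A I], then [E_{i} = (f_i / A) f_i^*], and on operators
   [(c u) u^*] with [c >= 0] both bounds agree: all three measures give
   [M^(1) = max_i ||f_i||^2 / A], and optimality means that this equals [n / N]. *)

Lemma closed_field_prim_root (F : closedFieldType) N :
  (0 < N)%N -> N%:R != 0 :> F -> exists z : F, N.-primitive_root z.
Proof.
move=> N_gt0 N_neq0; have [r XnE] := closed_field_poly_normal ('X^N - 1 : {poly F}).
rewrite (monicP (monicXnsubC _ N_gt0)) scale1r in XnE.
have r_unity : all N.-unity_root r by apply/allP => z; rewrite -root_prod_XsubC -XnE.
have r_uniq : uniq r by rewrite -separable_prod_XsubC -XnE separable_Xn_sub_1.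
have r_size : (N <= size r)%N.
  by rewrite -ltnS -(size_prod_XsubC r id) -XnE size_XnsubC.
by have /hasP [z _] := has_prim_root N_gt0 r_unity r_uniq r_size; exists z.
Qed.

Lemma sum_expr_unity_root_eq0 (F : idomainType) (z : F) N :
  z ^+ N = 1 -> z != 1 -> \sum_(j < N) z ^+ j = 0.
Proof.
move=> zN z_neq1; apply/eqP; move: (subrX1 z N); rewrite zN subrr => /esym/eqP.
by rewrite mulf_eq0 subr_eq0 (negbTE z_neq1).
Qed.

Lemma eq_mx_cV (T : pzRingType) m n (A B : 'M[T]_(m, n)) :
  (forall f : 'cV[T]_n, A *m f = B *m f) -> A = B.
Proof.
move=> AB; apply/matrixP => i j.
by have /matrixP/(_ i 0) := AB (delta_mx j 0); rewrite -!colE !mxE.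
Qed.

Section FrameOptimality.
Variable R : realType.
Local Notation C := R[i].
Local Notation "x %:C" := (real_complex R x) : ring_scope.

Lemma innerE n (x y : 'cV[C]_n) : inner x y = (adj y *m x) 0 0.
Proof. by rewrite /inner mxE; apply: eq_bigr => k _; rewrite /adj !mxE mulrC. Qed.

Lemma conj_inner n (x y : 'cV[C]_n) : (inner x y)^* = inner y x.
Proof.
by rewrite /inner rmorph_sum; apply: eq_bigr => k _; rewrite rmorphM /= conjCK mulrC.
Qed.

Lemma innerDl n (x y z : 'cV[C]_n) : inner (x + y) z = inner x z + inner y z.
Proof. by rewrite /inner -big_split; apply: eq_bigr => k _; rewrite mxE mulrDl. Qed.

Lemma innerZl n a (x z : 'cV[C]_n) : inner (a *: x) z = a * inner x z.
Proof. by rewrite /inner mulr_sumr; apply: eq_bigr => k _; rewrite mxE mulrA. Qed.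

Lemma innerDr n (x y z : 'cV[C]_n) : inner z (x + y) = inner z x + inner z y.
Proof. by rewrite -[LHS]conj_inner innerDl rmorphD /= !conj_inner. Qed.

Lemma innerZr n a (x z : 'cV[C]_n) : inner z (a *: x) = a^* * inner z x.
Proof. by rewrite -[LHS]conj_inner innerZl rmorphM /= !conj_inner. Qed.

Lemma innerBl n (x y z : 'cV[C]_n) : inner (x - y) z = inner x z - inner y z.
Proof. by rewrite innerDl -scaleN1r innerZl mulN1r. Qed.

Lemma innerBr n (x y z : 'cV[C]_n) : inner z (x - y) = inner z x - inner z y.
Proof. by rewrite innerDr -scaleN1r innerZr rmorphN1 mulN1r. Qed.

Lemma inner0l n (x : 'cV[C]_n) : inner 0 x = 0.
Proof. by rewrite -(subrr x) innerBl subrr. Qed.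

Lemma inner0r n (x : 'cV[C]_n) : inner x 0 = 0.
Proof. by rewrite -(subrr x) innerBr subrr. Qed.

Lemma inner_self_ge0 n (x : 'cV[C]_n) : 0 <= inner x x.
Proof. by apply: sumr_ge0 => k _; rewrite mul_conjC_ge0. Qed.

Lemma inner_self_eq0 n (x : 'cV[C]_n) : (inner x x == 0) = (x == 0).
Proof.
apply/idP/eqP => [/eqP/psumr_eq0P x0|->]; last by rewrite inner0r.
apply/matrixP => k j; rewrite (ord1 j) mxE; apply/eqP.
by rewrite -mul_conjC_eq0 x0 // => l _; rewrite mul_conjC_ge0.
Qed.

Lemma inner_CauchySchwarz n (x y : 'cV[C]_n) :
  `|inner x y| ^+ 2 <= inner x x * inner y y.
Proof.
have [/eqP|y_neq0] := eqVneq (inner y y) 0.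
  by rewrite inner_self_eq0 => /eqP->; rewrite inner0r inner0l normr0 expr0n mulr0.
have yy_gt0 : 0 < inner y y by rewrite lt_def y_neq0 inner_self_ge0.
pose t := inner x y / inner y y.
have := inner_self_ge0 (x - t *: y).
rewrite innerBl !innerBr !innerZl !innerZr rmorphM /= rmorphV ?unitfE //= !conj_inner.
set E := (X in 0 <= X) => E_ge0.
rewrite normCK conj_inner -subr_ge0.
have -> : inner x x * inner y y - inner x y * inner y x = E * inner y y.
  by rewrite /E /t; field; rewrite gt_eqF.
exact: mulr_ge0 E_ge0 (ltW yy_gt0).
Qed.

Lemma adjM m p q (A : 'M[C]_(m, p)) (B : 'M[C]_(p, q)) :
  adj (A *m B) = adj B *m adj A.
Proof.
apply/matrixP => i j; rewrite /adj !mxE rmorph_sum; apply: eq_bigr => k _.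
by rewrite !mxE rmorphM mulrC.
Qed.

Lemma adjK m p (A : 'M[C]_(m, p)) : adj (adj A) = A.
Proof. by apply/matrixP => i j; rewrite /adj !mxE conjCK. Qed.

Lemma adjZ m p a (A : 'M[C]_(m, p)) : adj (a *: A) = a^* *: adj A.
Proof. by apply/matrixP => i j; rewrite /adj !mxE rmorphM. Qed.

Lemma adj_eq0 m p (A : 'M[C]_(m, p)) : (adj A == 0) = (A == 0).
Proof.
have adj0 k l : adj (0 : 'M[C]_(k, l)) = 0.
  by apply/matrixP => i j; rewrite /adj !mxE conjC0.
by apply/eqP/eqP => [A0|->]; rewrite ?adj0 // -(adjK A) A0 adj0.
Qed.

Lemma conjC_real_complex (r : R) : (r%:C)^* = r%:C.
Proof. by apply: conj_Creal; rewrite complex_real. Qed.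

Lemma cmodE (z : C) : (cmod z)%:C = `|z|.
Proof. by rewrite /cmod RRe_real // normr_real. Qed.

Lemma cmod_ge0 (z : C) : 0 <= cmod z.
Proof. by rewrite -lecR cmodE normr_ge0. Qed.

Lemma cmodM (a b : C) : cmod (a * b) = cmod a * cmod b.
Proof. by apply: complexI; rewrite rmorphM !cmodE normrM. Qed.

Lemma cmodR (r : R) : 0 <= r -> cmod r%:C = r.
Proof. by move=> r_ge0; apply: complexI; rewrite cmodE ger0_norm // lecR. Qed.

Lemma conj_inner_cmod n (x y : 'cV[C]_n) : cmod (inner x y) = cmod (inner y x).
Proof. by apply: complexI; rewrite !cmodE -conj_inner norm_conjC. Qed.

Lemma hnorm_ge0 n (x : 'cV[C]_n) : 0 <= hnorm x.
Proof. exact: sqrtr_ge0. Qed.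

Lemma sqr_hnormE n (x : 'cV[C]_n) : (hnorm x ^+ 2)%:C = inner x x.
Proof.
have xx_real : inner x x \is Num.real by rewrite realE inner_self_ge0.
by rewrite /hnorm sqr_sqrtr ?RRe_real // -lecR RRe_real // inner_self_ge0.
Qed.

Lemma cmod_inner_self n (x : 'cV[C]_n) : cmod (inner x x) = hnorm x ^+ 2.
Proof. by apply: complexI; rewrite cmodE sqr_hnormE ger0_norm ?inner_self_ge0. Qed.

Lemma hnormZ n a (x : 'cV[C]_n) : hnorm (a *: x) = cmod a * hnorm x.
Proof.
apply/eqP; rewrite -(eqrXn2 (_ : 0 < 2)%N) ?mulr_ge0 ?cmod_ge0 ?hnorm_ge0 //.
apply/eqP; apply: complexI.
rewrite [LHS]sqr_hnormE exprMn [RHS]rmorphM /= sqr_hnormE innerZl innerZr mulrA -normCK.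
by rewrite rmorphXn /= cmodE.
Qed.

Lemma cmod_inner_le n (x y : 'cV[C]_n) : cmod (inner x y) <= hnorm x * hnorm y.
Proof.
rewrite -(ler_pXn2r (_ : 0 < 2)%N) ?nnegrE ?cmod_ge0 ?mulr_ge0 ?hnorm_ge0 //.
rewrite exprMn -lecR rmorphXn /= cmodE rmorphM /= !sqr_hnormE.
exact: inner_CauchySchwarz.
Qed.

Lemma sup_le_ge0 (S : set R) c : 0 <= c -> ubound S c -> sup S <= c.
Proof.
move=> c_ge0 Sc; have [->|/set0P S_neq0] := eqVneq S set0; first by rewrite sup0.
exact: ge_sup.
Qed.

Lemma sup_ge0 (S : set R) : has_ubound S -> (forall s, S s -> 0 <= s) -> 0 <= sup S.
Proof.
move=> S_ub S_ge0; have [->|/set0P [s Ss]] := eqVneq S set0; first by rewrite sup0.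
exact: le_trans (S_ge0 _ Ss) (ub_le_sup S_ub Ss).
Qed.

Lemma rank1_mulmx n (g f x : 'cV[C]_n) : (g *m adj f) *m x = inner x f *: g.
Proof. by rewrite -mulmxA [adj f *m x]mx11_scalar mul_mx_scalar innerE. Qed.

Lemma eigenvalue_rank1 n (g f : 'cV[C]_n) l :
  eigenvalue (g *m adj f) l -> l = 0 \/ l = inner g f.
Proof.
case/eigenvalueP => v vE v_neq0; have [->|l_neq0] := eqVneq l 0; [by left | right].
rewrite mulmxA [v *m g]mx11_scalar mul_scalar_mx in vE.
set s := (v *m g) 0 0 in vE.
have {}vE : v = (s / l) *: adj f.
  by apply: (scalerI l_neq0); rewrite -vE scalerA mulrCA mulfV ?mulr1.
have s_neq0 : s != 0 by apply: contraNneq v_neq0; rewrite vE => ->; rewrite mul0r scale0r.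
have : s = s / l * inner g f by rewrite {1}/s {1}vE -scalemxAl mxE innerE.
rewrite -mulrA -{1}[s]mulr1 => /(mulfI s_neq0)/esym.
by rewrite mulrC => /divr1_eq ->.
Qed.

Lemma eigenvalue_rank1_inner n (g f : 'cV[C]_n) :
  f != 0 -> eigenvalue (g *m adj f) (inner g f).
Proof.
move=> f_neq0; apply/eigenvalueP; exists (adj f); last by rewrite adj_eq0.
by rewrite mulmxA [adj f *m g]mx11_scalar mul_scalar_mx innerE.
Qed.

Lemma spec_radius_rank1 n (g f : 'cV[C]_n) : spec_radius (g *m adj f) = cmod (inner g f).
Proof.
rewrite /spec_radius; set S := (X in sup X).
have S_ub : ubound S (cmod (inner g f)).
  by move=> _ [l /eigenvalue_rank1 [|] -> <-]; rewrite ?cmodR ?cmod_ge0.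
apply/eqP; rewrite eq_le sup_le_ge0 ?cmod_ge0 //=.
have [f0|f_neq0] := eqVneq f 0.
  rewrite f0 inner0r cmodR //; apply: sup_ge0; first by exists (cmod (inner g f)).
  by move=> _ [l _ <-]; apply: cmod_ge0.
apply: ub_le_sup; first by exists (cmod (inner g f)).
by exists (inner g f); first exact: eigenvalue_rank1_inner.
Qed.

Lemma frob_norm_rank1 n (g f : 'cV[C]_n) : frob_norm (g *m adj f) = hnorm g * hnorm f.
Proof.
rewrite /frob_norm adjM adjK mulmxA -(mulmxA f) [adj g *m g]mx11_scalar mul_mx_scalar.
rewrite -scalemxAl mxtraceZ mxtrace_mulC trace_mx11 -!innerE -!sqr_hnormE -rmorphM /=.
by rewrite -exprMn sqrtr_sqr ger0_norm // mulr_ge0 ?hnorm_ge0.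
Qed.

Lemma cmod_rank1_quad_le n (g f x : 'cV[C]_n) :
  hnorm x = 1 -> cmod (inner ((g *m adj f) *m x) x) <= hnorm g * hnorm f.
Proof.
move=> x_unit; rewrite rank1_mulmx innerZl cmodM mulrC.
have := cmod_inner_le x f; have := cmod_inner_le g x; rewrite x_unit mulr1 mul1r.
by move=> /ler_pM le_fx /le_fx; apply; apply: cmod_ge0.
Qed.

Lemma num_radius_rank1_le n (g f : 'cV[C]_n) : num_radius (g *m adj f) <= hnorm g * hnorm f.
Proof.
apply: sup_le_ge0; first by rewrite mulr_ge0 ?hnorm_ge0.
by move=> _ [x /= x_unit <-]; apply: cmod_rank1_quad_le.
Qed.

Lemma num_radius_rank1_ge n (g f : 'cV[C]_n) : cmod (inner g f) <= num_radius (g *m adj f).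
Proof.
rewrite /num_radius; set S := (X in sup X).
have S_ub : has_ubound S.
  by exists (hnorm g * hnorm f) => _ [x /= x_unit <-]; apply: cmod_rank1_quad_le.
have [->|f_neq0] := eqVneq f 0.
  by rewrite inner0r cmodR //; apply: sup_ge0 => // _ [x _ <-]; apply: cmod_ge0.
have f_gt0 : 0 < hnorm f.
  rewrite lt_def hnorm_ge0 andbT; apply: contraNneq f_neq0 => f0.
  by rewrite -inner_self_eq0 -sqr_hnormE f0 expr2 mul0r.
pose x := (hnorm f)^-1%:C *: f.
have x_unit : hnorm x = 1 by rewrite hnormZ cmodR ?invr_ge0 ?hnorm_ge0 // mulVf ?gt_eqF.
apply: (ub_le_sup S_ub); exists x => //; congr cmod.
rewrite rank1_mulmx !innerZl innerZr -sqr_hnormE conjC_real_complex.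
rewrite mulrCA mulrA -!rmorphM /=.
have -> : (hnorm f)^-1 * ((hnorm f)^-1 * hnorm f ^+ 2) = 1 by field; rewrite gt_eqF.
by rewrite mul1r.
Qed.

Definition rank1_bounded (M : forall n, 'M[C]_n -> R) :=
  forall n (g f : 'cV[C]_n),
    cmod (inner g f) <= M n (g *m adj f) <= hnorm g * hnorm f.

Lemma rank1_bounded_frob_norm : rank1_bounded (@frob_norm R).
Proof. by move=> n g f; rewrite frob_norm_rank1 cmod_inner_le lexx. Qed.

Lemma rank1_bounded_spec_radius : rank1_bounded (@spec_radius R).
Proof. by move=> n g f; rewrite spec_radius_rank1 cmod_inner_le lexx. Qed.

Lemma rank1_bounded_num_radius : rank1_bounded (@num_radius R).
Proof. by move=> n g f; rewrite num_radius_rank1_ge num_radius_rank1_le. Qed.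

Lemma sum_rank1_mulmx n N (F G : 'I_N -> 'cV[C]_n) f :
  (\sum_(i < N) F i *m adj (G i)) *m f = \sum_(i < N) inner f (G i) *: F i.
Proof. by rewrite mulmx_suml; apply: eq_bigr => i _; rewrite rank1_mulmx. Qed.

Lemma is_dualE n N (F G : 'I_N -> 'cV[C]_n) :
  is_dual F G <-> \sum_(i < N) F i *m adj (G i) = 1%:M.
Proof.
split=> [FG|FG f]; last by rewrite -sum_rank1_mulmx FG mul1mx.
by apply: eq_mx_cV => f; rewrite sum_rank1_mulmx mul1mx -FG.
Qed.

Lemma dual_trace n N (F G : 'I_N -> 'cV[C]_n) :
  is_dual F G -> \sum_(i < N) inner (F i) (G i) = n%:R.
Proof.
move/is_dualE => FG; rewrite -(mxtrace1 C n) -FG raddf_sum /=.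
by apply: eq_bigr => i _; rewrite mxtrace_mulC trace_mx11 innerE.
Qed.

Lemma M1_ge0 n N (M : 'M[C]_n -> R) (F G : 'I_N -> 'cV[C]_n) : 0 <= M1 M F G.
Proof. exact: bigmax_ge_id. Qed.

Lemma M1_ge_ratio M n N (F G : 'I_N -> 'cV[C]_n) :
  rank1_bounded M -> is_dual F G -> n%:R / N%:R <= M1 (M n) F G.
Proof.
move=> M_bounded FG; have [N0|N_gt0] := posnP N.
  have -> : N%:R = 0 :> R by rewrite N0.
  by rewrite invr0 mulr0 M1_ge0.
rewrite ler_pdivrMr ?ltr0n //.
have -> : M1 (M n) F G * N%:R = \sum_(i < N) M1 (M n) F G.
  by rewrite sumr_const card_ord mulr_natr.
(* [n] is the trace of [\sum_i f_i g_i^*], and each [|<f_i, g_i>|] is at most [M1] *)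
have n_le : n%:R <= \sum_(i < N) cmod (inner (F i) (G i)).
  rewrite -lecR rmorph_sum /= rmorph_nat -(dual_trace FG).
  under eq_bigr do rewrite cmodE.
  by rewrite -[X in X <= _]ger0_norm ?ler_norm_sum // dual_trace ?ler0n.
apply: (le_trans n_le); apply: ler_sum => i _; rewrite conj_inner_cmod.
apply: le_trans (le_bigmax _ (fun i => M n (E1 F G i)) i).
by case/andP: (M_bounded n (G i) (F i)).
Qed.

Lemma rank1_bounded_self M n (c : R) (u : 'cV[C]_n) :
  rank1_bounded M -> 0 <= c -> M n ((c%:C *: u) *m adj u) = c * hnorm u ^+ 2.
Proof.
move=> M_bounded c_ge0; have /andP [lb ub] := M_bounded n (c%:C *: u) u.
rewrite hnormZ cmodR // -mulrA -expr2 in ub.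
rewrite innerZl cmodM cmodR // cmod_inner_self in lb.
by apply/eqP; rewrite eq_le lb ub.
Qed.

Lemma frame_op_quadC n N (F : 'I_N -> 'cV[C]_n) f :
  (\sum_(i < N) cmod (inner f (F i)) ^+ 2)%:C = inner (frame_op F *m f) f.
Proof.
rewrite rmorph_sum /= sum_rank1_mulmx.
rewrite (big_morph (fun x => inner x f) (fun x y => innerDl x y f) (inner0l f)).
by apply: eq_bigr => i _; rewrite rmorphXn /= cmodE innerZl normCK conj_inner.
Qed.

Lemma mx_eq0_inner_self n (D : 'M[C]_n) :
  (forall f : 'cV[C]_n, inner (D *m f) f = 0) -> D = 0.
Proof.
move=> D0; apply/matrixP => k l; rewrite [RHS]mxE.
have D_delta i j : inner (D *m delta_mx j 0) (delta_mx i 0) = D i j.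
  have adj_delta : adj (delta_mx i 0 : 'cV[C]_n) = delta_mx 0 i.
    by apply/matrixP => a b; rewrite /adj !mxE rmorph_nat andbC.
  by rewrite innerE adj_delta -rowE -colE !mxE.
(* polarization with the scalars [1] and ['i] *)
have polar (a : C) : a^* * D k l + a * D l k = 0.
  have := D0 (delta_mx l 0 + a *: delta_mx k 0).
  rewrite mulmxDr -scalemxAr !innerDl !innerDr !innerZl !innerZr !D_delta.
  by rewrite -!D_delta !D0 !mulr0 add0r addr0; apply.
have : 2 * 'i * D k l = 'i * (1^* * D k l + 1 * D l k) - ('i^* * D k l + 'i * D l k).
  by rewrite conjC1 conjCi; ring.
rewrite !polar mulr0 subrr => /eqP.
by rewrite !mulf_eq0 pnatr_eq0 (negbTE (neq0Ci _)) /= => /eqP.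
Qed.

Lemma tight_frame_op n N (F : 'I_N -> 'cV[C]_n) :
  is_tight_frame F -> exists2 A : R, 0 < A & frame_op F = A%:C%:M.
Proof.
case=> A [A_gt0 FA]; exists A => //; apply/eqP; rewrite -subr_eq0; apply/eqP.
apply: mx_eq0_inner_self => f.
rewrite mulmxBl innerBl -frame_op_quadC FA rmorphM /= sqr_hnormE.
by rewrite mul_scalar_mx innerZl subrr.
Qed.

Lemma canon_dual_scalar n N (F : 'I_N -> 'cV[C]_n) (A : R) :
  frame_op F = A%:C%:M -> canon_dual F = fun i => A^-1%:C *: F i.
Proof.
by move=> FA; apply: funext => i; rewrite /canon_dual FA invmx_scalar mul_scalar_mx fmorphV.
Qed.

Lemma scalar_frame_op_dual_pair n N (F : 'I_N -> 'cV[C]_n) (A : R) :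
  0 < A -> frame_op F = A%:C%:M -> dual_pair F (fun i => A^-1%:C *: F i).
Proof.
move=> A_gt0 FA; split.
  exists A, A; split=> // f.
  suff -> : \sum_(i < N) cmod (inner f (F i)) ^+ 2 = A * hnorm f ^+ 2 by rewrite lexx.
  by apply: complexI; rewrite frame_op_quadC FA mul_scalar_mx innerZl rmorphM /= sqr_hnormE.
apply/is_dualE; under eq_bigr do rewrite adjZ conjC_real_complex -scalemxAr.
by rewrite -scaler_sumr -/(frame_op F) FA scale_scalar_mx -rmorphM /= mulVf ?gt_eqF.
Qed.

Lemma M1_canon_dual_scalar M n N (F : 'I_N -> 'cV[C]_n) (A : R) :
  rank1_bounded M -> 0 < A -> frame_op F = A%:C%:M ->
  M1 (M n) F (canon_dual F) = \big[Num.max/0]_(i < N) (A^-1 * hnorm (F i) ^+ 2).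
Proof.
move=> M_bounded A_gt0 FA; rewrite /M1 (canon_dual_scalar FA).
by apply: eq_bigr => i _; rewrite /E1 rank1_bounded_self // invr_ge0 ltW.
Qed.

Lemma harmonic_frame n N : (n <= N)%N ->
  exists U : 'I_N -> 'cV[C]_n,
    frame_op U = (N%:R : C)%:M /\ forall j, hnorm (U j) ^+ 2 = n%:R.
Proof.
move=> nN; have [N0|N_gt0] := posnP N.
  rewrite N0 leqn0 in nN; rewrite (eqP nN).
  exists (fun=> 0); split=> [|j]; first by apply/matrixP => -[].
  by rewrite /hnorm inner0r sqrtr0 expr2 mul0r.
have N_neq0 : N%:R != 0 :> C by rewrite pnatr_eq0 -lt0n.
have [w w_prim] := closed_field_prim_root N_gt0 N_neq0.
have wXN m : (w ^+ m) ^+ N = 1 by rewrite -exprM mulnC exprM (prim_expr_order w_prim) expr1n.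
have w_norm : `|w| = 1.
  by apply/eqP; rewrite -(pexpr_eq1 N_gt0) ?normr_ge0 // -normrX (wXN 1%N) normr1.
have w_conj : w^* = w^-1 by rewrite invC_norm w_norm expr1n invr1 mul1r.
have ltN (k : 'I_n) : (k < N)%N by apply: leq_trans nN.
exists (fun j => \col_(k < n) w ^+ (j * k)); split=> [|j]; last first.
  apply: complexI; rewrite [LHS]sqr_hnormE rmorph_nat /inner.
  under eq_bigr do rewrite mxE -normCK normrX w_norm !expr1n.
  by rewrite sumr_const card_ord.
apply/matrixP => k l; rewrite summxE mxE.
pose z := w ^+ k / w ^+ l.
have term (j : 'I_N) :
    (\col_(k < n) w ^+ (j * k) *m adj (\col_(k < n) w ^+ (j * k))) k l = z ^+ j.
  rewrite !mxE big_ord1 !mxE rmorphXn /= w_conj exprVn /z exprMn exprVn -!exprM.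
  by rewrite [(k * j)%N]mulnC [(l * j)%N]mulnC.
under eq_bigr do rewrite term.
have w_neq0 : w != 0 by rewrite -normr_eq0 w_norm oner_eq0.
have [k_eq_l|k_neq_l] := eqVneq k l.
  have z1 : z = 1 by rewrite /z k_eq_l divff // expf_neq0.
  under eq_bigr do rewrite z1 expr1n.
  by rewrite sumr_const card_ord.
rewrite mulr0n sum_expr_unity_root_eq0 //.
  by rewrite /z exprMn exprVn !wXN invr1 mulr1.
apply: contra k_neq_l => /eqP /divr1_eq /eqP.
by rewrite (eq_prim_root_expr w_prim) !modn_small.
Qed.

Lemma inf_attained (S : set R) c : S c -> lbound S c -> inf S = c.
Proof.
move=> Sc S_lb; apply/eqP; rewrite eq_le (lb_le_inf _ S_lb) ?andbT; last by exists c.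
by apply: ge_inf Sc; exists c.
Qed.

Lemma optimal_dual_pair_exists M n N : rank1_bounded M -> (n <= N)%N ->
  exists F G : 'I_N -> 'cV[C]_n, dual_pair F G /\ M1 (M n) F G = n%:R / N%:R.
Proof.
case: N => [|N] M_bounded nN.
  move: nN; rewrite leqn0 => /eqP n0; subst n.
  exists (fun=> 0), (fun=> 1^-1%:C *: 0); split; last by rewrite /M1 big_ord0 mul0r.
  apply: scalar_frame_op_dual_pair; first exact: ltr01.
  by apply/matrixP => -[].
have [U [UN U_norm]] := harmonic_frame nN.
exists U, (fun i => N.+1%:R^-1%:C *: U i); split.
  apply: scalar_frame_op_dual_pair; first by rewrite ltr0n.
  by rewrite UN; congr (_%:M); rewrite rmorph_nat.
rewrite /M1; under eq_bigr do rewrite /E1 rank1_bounded_self ?invr_ge0 ?ler0n // U_norm.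
apply/eqP; rewrite eq_le mulrC (le_bigmax _ _ ord0) andbT.
by rewrite bigmax_le // mulr_ge0 ?invr_ge0 ?ler0n.
Qed.

Lemma optimal_value M n N : rank1_bounded M -> (n <= N)%N ->
  inf [set r : R | exists F G : 'I_N -> 'cV[C]_n, dual_pair F G /\ r = M1 (M n) F G]
  = n%:R / N%:R.
Proof.
move=> M_bounded nN; apply: inf_attained.
  by have [F [G [FG M1E]]] := optimal_dual_pair_exists M_bounded nN; exists F, G; rewrite M1E.
by move=> _ [F [G [[_ FG] ->]]]; apply: M1_ge_ratio.
Qed.

Lemma optimal_canon_dual_scalarE M n N (F : 'I_N -> 'cV[C]_n) (A : R) :
  rank1_bounded M -> (n <= N)%N -> 0 < A -> frame_op F = A%:C%:M ->
  optimal (M n) F (canon_dual F) <->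
  \big[Num.max/0]_(i < N) (A^-1 * hnorm (F i) ^+ 2) = n%:R / N%:R.
Proof.
move=> M_bounded nN A_gt0 FA.
have FG : dual_pair F (canon_dual F).
  by rewrite (canon_dual_scalar FA); apply: scalar_frame_op_dual_pair.
rewrite /optimal optimal_value // (M1_canon_dual_scalar M_bounded A_gt0 FA).
by split=> [[]|].
Qed.

End FrameOptimality.

Theorem theorem6p2 (R : realType) (n N : nat) (F : 'I_N -> 'cV[R[i]]_n) :
  (n <= N)%N ->
  is_tight_frame F ->
  [<-> optimal (@frob_norm R n) F (canon_dual F);
       optimal (@spec_radius R n) F (canon_dual F);
       optimal (@num_radius R n) F (canon_dual F)].
Proof.
move=> nN /tight_frame_op [A A_gt0 FA].
pose opt M (M_bounded : rank1_bounded M) :=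
  optimal_canon_dual_scalarE M_bounded nN A_gt0 FA.
have frob := opt _ (@rank1_bounded_frob_norm R).
have spec := opt _ (@rank1_bounded_spec_radius R).
have num := opt _ (@rank1_bounded_num_radius R).
by split; [|split] => [/frob/spec | /spec/num | /num/frob].
Qed.
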